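(* Let $\mu,\nu\in\mathcal{P}(\mathcal{X})$, $m>0$, take $m_1=m_2=m$ for the marginal cones (with $\mu(B_m)>0$, $\nu(B_m)>0$), let $\alpha$ be a tail function with $\alpha>0$, and let $\tilde\alpha$ be a tail function. For every $f\in\mathcal{F}^{\mu\otimes\nu}_{\alpha,0}$, \[ \int f(\cdot,y)\,\nu(dy)\in\mathcal{F}^{\mu}_{\alpha,\tilde\alpha}\quad\text{and}\quad\int f(x,\cdot)\,\mu(dx)\in\mathcal{F}^{\nu}_{\alpha,\tilde\alpha}. \] Moreover, identifying a function $g$ on $\mathcal{X}$ with the function $(x,y)\mapsto g(x)$ on $\mathcal{X}\times\mathcal{X}$, we have $\mathcal{G}^{\mu}_{\alpha,\tilde\alpha}\subseteq\mathcal{G}^{\mu\otimes\nu}_{\alpha,0}$ and $d_{\mathcal{G}^{\mu\otimes\nu}_{\alpha,0}}(g,\tilde g)\le d_{\mathcal{G}^{\mu}_{\alpha,\tilde\alpha}}(g,\tilde g)$ for all $g,\tilde g\in\mathcal{G}^{\mu}_{\alpha,\tilde\alpha}$; analogously (identifying $g$ with $(x,y)\mapsto g(y)$) $\mathcal{G}^{\nu}_{\alpha,\tilde\alpha}\subseteq\mathcal{G}^{\mu\otimes\nu}_{\alpha,0}$ and $d_{\mathcal{G}^{\mu\otimes\nu}_{\alpha,0}}(g,\tilde g)\le d_{\mathcal{G}^{\nu}_{\alpha,\tilde\alpha}}(g,\tilde g)$ for $g,\tilde g\in\mathcal{G}^{\nu}_{\alpha,\tilde\alpha}$.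
   Context: $\mathcal{X}$ is a Polish space with metric $d_{\mathcal{X}}$, $x_0$ fixed, $B_r=\{x:d_{\mathcal{X}}(x_0,x)\le r\}$, $B_r^{\mathsf c}=\mathcal{X}\setminus B_r$. On $\mathcal{X}\times\mathcal{X}$ use the metric $\max\{d_{\mathcal{X}}(x,\tilde x),d_{\mathcal{X}}(y,\tilde y)\}$ and $\bar B_r=\{\bar x\in\mathcal{X}\times\mathcal{X}: \text{distance from }(x_0,x_0)\le r\}$. A tail function is a non-increasing $\alpha:(0,\infty)\to[0,\infty)$ with $\lim_{r\to\infty}\alpha(r)=0$. For $\rho\in\mathcal{P}(\mathcal{X})$: $\mathcal{F}^{\rho}_{\alpha,\tilde\alpha}$ is the set of $f\in L^2(\rho)$ with $f\mathbf 1_{B_{m_2}}\ge0$ $\rho$-a.s., $\int_{B_r^{\mathsf c}}f_+\,d\rho\le\alpha(r)\int f\,d\rho$ for all $r\ge m_1$, $\int_{B_r^{\mathsf c}}f_-\,d\rho\le\tilde\alpha(r)\int f\,d\rho$ for all $r\ge m_2$; $\mathcal{G}^{\rho}_{\alpha,\tilde\alpha}=\{g\in L^2(\rho):\int fg\,d\rho\ge0\ \forall f\in\mathcal{F}^{\rho}_{\alpha,\tilde\alpha}\}$. On the product: $\mathcal{F}^{\mu\otimes\nu}_{\alpha,0}=\{f\in L^2(\mu\otimes\nu): f\ge0,\ \int_{\bar B_r^{\mathsf c}}f\,d\mu\otimes\nu\le\alpha(r)\int f\,d\mu\otimes\nu\text{ for all }r\ge m\}$ and $\mathcal{G}^{\mu\otimes\nu}_{\alpha,0}=\{g\in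 L^2(\mu\otimes\nu):\int fg\,d\mu\otimes\nu\ge0\ \forall f\in\mathcal{F}^{\mu\otimes\nu}_{\alpha,0}\}$. Hilbert's metric for a cone $C$: $f\le_C g$ iff $g-f\in C$; $f\sim_C g$ iff $f\le_C bg$ and $g\le_C b'f$ for some $b,b'>0$; $M(f,g)=\inf\{b>0:bg-f\in C\}$, $m(f,g)=\sup\{a>0:f-ag\in C\}$; $d_C(f,g)=\log(M/m)$ if $f\sim_C g$, $g\ne0$, and $\infty$ otherwise. *)

From HB Require Import structures.
From mathcomp Require Import all_boot all_order all_algebra.
From mathcomp Require Import all_classical all_reals all_analysis.
Set Implicit Arguments. Unset Strict Implicit. Unset Printing Implicit Defensive.
Import Order.TTheory GRing.Theory Num.Theory.
Local Open Scope classical_set_scope.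
Local Open Scope ring_scope.

Section defs.
Context (R : realType).

Definition is_metric (T : Type) (dX : T -> T -> R) : Prop :=
  [/\ (forall x, dX x x = 0), (forall x y, dX x y = 0 -> x = y),
      (forall x y, dX x y = dX y x) &
      (forall x y z, dX x z <= dX x y + dX y z)].

Definition metric_open (T : Type) (dX : T -> T -> R) (O : set T) : Prop :=
  forall x, O x -> exists2 e : R, 0 < e & [set y | dX x y < e] `<=` O.

Definition metric_separable (T : Type) (dX : T -> T -> R) : Prop :=
  exists D : set T, countable D /\
    forall x (e : R), 0 < e -> exists2 y, D y & dX x y < e.

Definition metric_complete (T : Type) (dX : T -> T -> R) : Prop :=
  forall u : nat -> T,
    (forall e : R, 0 < e -> exists N, forall n k, (N <= n)%N -> (N <= k)%N ->
        dX (u n) (u k) < e) ->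
    exists l, forall e : R, 0 < e -> exists N, forall n, (N <= n)%N ->
        dX (u n) l < e.

Definition polish_metric d (T : measurableType d) (dX : T -> T -> R) : Prop :=
  [/\ is_metric dX, metric_separable dX, metric_complete dX &
      (@measurable d T = <<s [set O | metric_open dX O] >>)].

Definition cball0 (T : Type) (dX : T -> T -> R) (x0 : T) (r : R) : set T :=
  [set x | dX x0 x <= r].
Definition prod_cball0 (T : Type) (dX : T -> T -> R) (x0 : T) (r : R) : set (T * T) :=
  [set p | Num.max (dX x0 p.1) (dX x0 p.2) <= r].

(* ---------- tail functions (only their values on (0,oo) matter) ---------- *)
Definition tail_function (a : R -> R) : Prop :=
  [/\ (forall r s, 0 < r -> r <= s -> a s <= a r),
      (forall r, 0 < r -> 0 <= a r) &
      a r @[r --> +oo] --> 0].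

Definition L2 d (T : measurableType d) (rho : {measure set T -> \bar R})
  (f : T -> R) : Prop :=
  measurable_fun setT f /\ (\int[rho]_x ((`|f x| ^+ 2)%:E) < +oo)%E.

Definition Fcone d (T : measurableType d) (dX : T -> T -> R) (x0 : T)
  (rho : {measure set T -> \bar R}) (m : R) (a ta : R -> R) : set (T -> R) :=
  [set f | [/\ L2 rho f,
     {ae rho, forall x, cball0 dX x0 m x -> 0 <= f x},
     (forall r, m <= r ->
        (\int[rho]_(x in ~` cball0 dX x0 r) ((f^\+ x)%:E)
          <= (a r)%:E * \int[rho]_x ((f x)%:E))%E) &
     (forall r, m <= r ->
        (\int[rho]_(x in ~` cball0 dX x0 r) ((f^\- x)%:E)
          <= (ta r)%:E * \int[rho]_x ((f x)%:E))%E)]].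

Definition Gcone d (T : measurableType d) (rho : {measure set T -> \bar R})
  (F : set (T -> R)) : set (T -> R) :=
  [set g | L2 rho g /\
     forall f, F f -> (0 <= \int[rho]_x ((f x * g x)%:E))%E].

Definition Fcone_prod d (T : measurableType d) (dX : T -> T -> R) (x0 : T)
  (P : {measure set (T * T) -> \bar R}) (m : R) (a : R -> R)
  : set (T * T -> R) :=
  [set f | [/\ L2 P f,
     {ae P, forall p, 0 <= f p} &
     (forall r, m <= r ->
        (\int[P]_(p in ~` prod_cball0 dX x0 r) ((f p)%:E)
          <= (a r)%:E * \int[P]_p ((f p)%:E))%E)]].

Definition cone_le (T : Type) (C : set (T -> R)) (f g : T -> R) : Prop :=
  C (fun x => g x - f x).

Definition cone_sim (T : Type) (C : set (T -> R)) (f g : T -> R) : Prop :=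
  exists b b' : R, [/\ 0 < b, 0 < b',
    cone_le C f (fun x => b * g x) & cone_le C g (fun x => b' * f x)].

Definition hM (T : Type) (C : set (T -> R)) (f g : T -> R) : \bar R :=
  ereal_inf [set b%:E | b in [set b : R | 0 < b /\ C (fun x => b * g x - f x)]].

Definition hm (T : Type) (C : set (T -> R)) (f g : T -> R) : \bar R :=
  ereal_sup [set a%:E | a in [set a : R | 0 < a /\ C (fun x => f x - a * g x)]].

(* g <> 0 in L^2(rho): g is not rho-a.e. zero.
   d_C(f,g) = log (M/m) = lne M - lne m  (in \bar R), +oo otherwise *)
Definition hilbert_metric d (T : measurableType d)
  (rho : {measure set T -> \bar R}) (C : set (T -> R)) (f g : T -> R)
  : \bar R :=
  if `[< cone_sim C f g /\ ~ {ae rho, forall x, g x = 0} >]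
  then (lne (hM C f g) - lne (hm C f g))%E
  else +oo%E.

End defs.

(* For
   [F x = int f(x, y) dnu(y)], Fubini turns the tail mass of [F] outside [B_r]
   into the mass of [f] on [B_r^c x X], which lies outside the product ball
   [\bar B_r]; Jensen's inequality bounds the L^2 norm of [F]; and since [f >= 0]
   a.e., so is [F], whence [F^-] carries no mass.  Fubini also gives
   [int f(x, y) g(x) = int F(x) g(x)], so [g |-> g o fst] maps the dual cone over
   [mu] into the one over [mu x nu].  It therefore preserves every comparison
   [b g - g'] in the cone, which can only lower [M] and raise [m] in Hilbert's
   metric.  The second coordinate reduces to the first through the swap
   [(x, y) |-> (y, x)], which exchanges [mu x nu] with [nu x mu] and preserves
   product balls. *)

From HB Require Import structures.
From mathcomp Require Import all_boot all_order all_algebra.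
From mathcomp Require Import all_classical all_reals all_analysis.
From mathcomp Require Import unstable measurable_realfun ring lra.
Set Implicit Arguments. Unset Strict Implicit. Unset Printing Implicit Defensive.
Import Order.TTheory GRing.Theory Num.Theory.
Local Open Scope classical_set_scope.
Local Open Scope ring_scope.

Section square_integrable.
Local Open Scope ereal_scope.
Context (R : realType) d (T : measurableType d) (rho : {measure set T -> \bar R}).

Lemma L2_mul_integrable (h k : T -> R) : L2 rho h -> L2 rho k ->
  rho.-integrable setT (EFin \o (fun x => h x * k x)%R).
Proof.
move=> [mh ih] [mk ik]; apply/integrableP; split.
  by apply/measurable_EFinP; exact: measurable_funM.
have mnorm2 (u : T -> R) : measurable_fun setT u ->
    measurable_fun setT (fun x => (`|u x| ^+ 2)%:E).
  by move=> mu'; apply/measurable_EFinP/measurable_funX; exact: measurableT_comp.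
apply: (@le_lt_trans _ _ (\int[rho]_x ((`|h x| ^+ 2)%:E + (`|k x| ^+ 2)%:E))).
  apply: ge0_le_integral => //.
  - by apply: measurableT_comp => //; apply/measurable_EFinP; exact: measurable_funM.
  - by apply: emeasurable_funD; exact: mnorm2.
  - move=> x _ /=; rewrite -EFinD lee_fin normrM.
    have := normr_ge0 (h x); have := normr_ge0 (k x); nra.
by rewrite ge0_integralD //; [exact: lte_add_pinfty | exact: mnorm2 | exact: mnorm2].
Qed.

Lemma L2_cst (c : R) : rho setT < +oo -> L2 rho (cst c).
Proof.
move=> rho_fin; split => //.
by rewrite (eq_integral (cst (`|c| ^+ 2)%:E)) // integral_cst //= lte_mul_pinfty.
Qed.

Lemma L2_integrable (h : T -> R) : rho setT < +oo -> L2 rho h ->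
  rho.-integrable setT (EFin \o h).
Proof.
move=> rho_fin Lh; apply: eq_integrable (L2_mul_integrable Lh (L2_cst 1 rho_fin)) => //.
by move=> x _ /=; rewrite mulr1.
Qed.

(* Jensen for the square: expand the variance [int (h - c)^2 >= 0], [c = int h]. *)
Lemma sqr_Rintegral_le (h : T -> R) : rho setT = 1 -> L2 rho h ->
  ((Rintegral rho setT h) ^+ 2)%:E <= \int[rho]_x ((`|h x| ^+ 2)%:E).
Proof.
move=> rho1 Lh; have rho_fin : rho setT < +oo by rewrite rho1 ltry.
have ih := L2_integrable rho_fin Lh.
have ihh := L2_mul_integrable Lh Lh.
have icst c := L2_integrable rho_fin (L2_cst c rho_fin).
move Ec : (Rintegral rho setT h) => c.
have var_ge0 : (0 <= Rintegral rho setT (fun x => (h x - c) ^+ 2))%R.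
  by apply: Rintegral_ge0 => x _; exact: sqr_ge0.
have varE : (Rintegral rho setT (fun x => (h x - c) ^+ 2) =
    Rintegral rho setT (fun x => h x * h x) - c ^+ 2)%R.
  rewrite (@eq_Rintegral _ _ _ _ _ (fun x => h x * h x + c ^+ 2 - 2 * c * h x)%R);
    last by move=> x _; ring.
  rewrite RintegralB //; last first.
  - by apply: eq_integrable (integrableZl _ (2 * c) ih) => // x _ /=; rewrite EFinM.
  - by apply: eq_integrable (integrableD _ ihh (icst (c ^+ 2)%R)) => // x _.
  rewrite RintegralD //; last exact: icst.
  rewrite Rintegral_cst // RintegralZl // rho1 /= mulr1 Ec.
  nra.
rewrite (eq_integral (fun x => (h x * h x)%:E)); last first.
  by move=> x _; rewrite real_normK ?num_real // expr2.
rewrite -(fineK (integrable_fin_num measurableT ihh)) lee_fin.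
by move: var_ge0; rewrite varE /Rintegral; lra.
Qed.

End square_integrable.

Section ae_nonnegative.
Local Open Scope ereal_scope.
Context (R : realType) d (T : measurableType d) (rho : {measure set T -> \bar R}).

Lemma ae_ge0_integral_funrpos (f : T -> R) (D : set T) : measurable D ->
  measurable_fun setT f -> {ae rho, forall x, (0 <= f x)%R} ->
  \int[rho]_(x in D) (f x)%:E = \int[rho]_(x in D) (f^\+ x)%:E.
Proof.
move=> mD mf f0; apply: ae_eq_integral => //.
- by apply/measurable_EFinP; exact: measurable_funTS.
- by apply/measurable_EFinP/measurable_funTS; exact: measurable_funrpos.
- by apply: filterS f0 => x fx0 _; rewrite /funrpos max_l.
Qed.

Lemma ae_ge0_integral_funrneg (f : T -> R) (D : set T) : measurable D ->
  measurable_fun setT f -> {ae rho, forall x, (0 <= f x)%R} ->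
  \int[rho]_(x in D) (f^\- x)%:E = 0.
Proof.
move=> mD mf f0; rewrite (ae_eq_integral (cst 0)) ?integral0 //.
- by apply/measurable_EFinP/measurable_funTS; exact: measurable_funrneg.
- by apply: filterS f0 => x fx0 _ /=; rewrite /funrneg max_r // oppr_le0.
Qed.

Lemma ae_ge0_integral_ge0 (f : T -> R) (D : set T) : measurable D ->
  measurable_fun setT f -> {ae rho, forall x, (0 <= f x)%R} ->
  0 <= \int[rho]_(x in D) (f x)%:E.
Proof.
move=> mD mf f0; rewrite ae_ge0_integral_funrpos //.
by apply: integral_ge0 => x _; rewrite lee_fin funrpos_ge0.
Qed.

Lemma ae_ge0_subset_integral (f : T -> R) (A B : set T) :
  measurable A -> measurable B -> A `<=` B ->
  measurable_fun setT f -> {ae rho, forall x, (0 <= f x)%R} ->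
  \int[rho]_(x in A) (f x)%:E <= \int[rho]_(x in B) (f x)%:E.
Proof.
move=> mA mB AB mf f0.
rewrite (ae_ge0_integral_funrpos mA) // (ae_ge0_integral_funrpos mB) //.
apply: ge0_subset_integral => //; last by move=> x _; rewrite lee_fin funrpos_ge0.
by apply/measurable_EFinP/measurable_funTS; exact: measurable_funrpos.
Qed.

End ae_nonnegative.

Lemma lne_nondecreasing (R : realType) : {homo @lne R : x y / (x <= y)%E}.
Proof.
move=> x y xy; have [x_le0|x_gt0] := leP x 0%E; first by rewrite le0_lneNy // leNye.
rewrite lee_lne // in_itv /= leey andbT ?(ltW x_gt0) //.
exact: le_trans (ltW x_gt0) xy.
Qed.

Section product_measure.
Local Open Scope ereal_scope.
Context (R : realType) d1 d2 (T1 : measurableType d1) (T2 : measurableType d2).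
Context (mu : {sigma_finite_measure set T1 -> \bar R})
  (nu : {sigma_finite_measure set T2 -> \bar R}).

Lemma ge0_integral_prod_swap (h : T1 * T2 -> \bar R) :
  measurable_fun setT h -> (forall p, 0 <= h p) ->
  \int[mu \x nu]_p h p = \int[nu \x mu]_q h (swap q).
Proof.
move=> mh h0; rewrite fubini_tonelli2 // fubini_tonelli1 //.
exact: (measurableT_comp mh (@measurable_swap _ _ T2 T1)).
Qed.

Lemma integral_prod_swap (h : T1 * T2 -> \bar R) : measurable_fun setT h ->
  \int[mu \x nu]_p h p = \int[nu \x mu]_q h (swap q).
Proof.
move=> mh; rewrite integralE [RHS]integralE.
rewrite -[fun q => h (swap q)]/(h \o swap) (funepos_comp h swap) (funeneg_comp h swap).
rewrite !ge0_integral_prod_swap //.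
- exact: measurable_funeneg.
- exact: measurable_funepos.
Qed.

Lemma integral_prod_swap_in (D : set (T1 * T2)) (h : T1 * T2 -> \bar R) :
  measurable D -> measurable_fun setT h ->
  \int[mu \x nu]_(p in D) h p = \int[nu \x mu]_(q in swap @^-1` D) h (swap q).
Proof.
move=> mD mh; rewrite integral_mkcond [RHS]integral_mkcond integral_prod_swap //.
by apply/(measurable_restrictT _ mD); exact: measurable_funTS.
Qed.

Lemma prod_measure_swap (A : set (T1 * T2)) : measurable A ->
  (nu \x mu) (swap @^-1` A) = (mu \x nu) A.
Proof.
move=> mA; have mA' : measurable (swap @^-1` A).
  by rewrite -[_ @^-1` _]setTI; exact: measurable_swap.
rewrite -[in LHS](setIT (swap @^-1` A)) -[in RHS](setIT A) -!integral_indic //.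
by rewrite integral_prod_swap //; exact/measurable_EFinP/measurable_indic.
Qed.

Lemma ae_prod_swap (Q : T1 * T2 -> Prop) :
  {ae mu \x nu, forall p, Q p} -> {ae nu \x mu, forall q, Q (swap q)}.
Proof.
case=> N [mN N0 QN]; exists (swap @^-1` N); split => //.
- by rewrite -[_ @^-1` _]setTI; exact: measurable_swap.
- by rewrite prod_measure_swap.
- by move=> q /QN.
Qed.

Lemma L2_prod_swap (h : T1 * T2 -> R) :
  L2 (mu \x nu) h -> L2 (nu \x mu) (fun q => h (swap q)).
Proof.
case=> mh ih; split; first exact: measurableT_comp mh (@measurable_swap _ _ T2 T1).
rewrite -(ge0_integral_prod_swap (h := fun p => (`|h p| ^+ 2)%:E)) //.
by apply/measurable_EFinP/measurable_funX; exact: measurableT_comp.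
Qed.

Lemma ae_prod_xsection (Q : T1 * T2 -> Prop) :
  {ae mu \x nu, forall p, Q p} -> {ae mu, forall x, {ae nu, forall y, Q (x, y)}}.
Proof.
case=> N [mN N0 QN].
have mxN : measurable_fun setT (nu \o xsection N) := measurable_fun_xsection nu mN.
have /(ae_eq_integral_abs mu measurableT mxN).1 :
    \int[mu]_x `|(nu \o xsection N) x| = 0.
  rewrite -N0; apply: eq_integral => x _; exact: gee0_abs.
apply: filterS => x /(_ I) xN0; exists (xsection N x); split => //.
- exact: measurable_xsection.
- by move=> y /QN; rewrite /xsection /= inE.
Qed.

Lemma ae_fst (Q : T1 -> Prop) : nu setT != 0 ->
  {ae mu \x nu, forall p, Q p.1} -> {ae mu, forall x, Q x}.
Proof.
move=> nu_neq0 /ae_prod_xsection; apply: filterS => x [N [mN N0 QN]].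
apply: contrapT => nQx; move/eqP: nu_neq0; apply.
by apply/eqP; rewrite -measure_le0 -N0 le_measure ?inE // => y _; exact: QN.
Qed.

End product_measure.

Section balls.
Context (R : realType) d (X : measurableType d) (dX : X -> X -> R) (x0 : X).

Lemma prod_cball0_swap (r : R) :
  swap @^-1` prod_cball0 dX x0 r = prod_cball0 dX x0 r.
Proof. by apply/seteqP; split => -[x y]; rewrite /prod_cball0 /= maxC. Qed.

Hypothesis dX_polish : polish_metric dX.

Lemma measurable_cball0C (r : R) : measurable (~` cball0 dX x0 r).
Proof.
case: dX_polish => [[_ _ dX_sym dX_tri] _ _ ->].
apply: sub_sigma_algebra => x /= /negP; rewrite -ltNge => rx.
exists (dX x0 x - r); first by rewrite subr_gt0.
move=> y /= xy; rewrite /cball0 /= => yr.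
have := dX_tri x0 y x; rewrite (dX_sym y x); lra.
Qed.

Lemma measurable_prod_cball0C (r : R) : measurable (~` prod_cball0 dX x0 r).
Proof.
have -> : ~` prod_cball0 dX x0 r =
    (~` cball0 dX x0 r) `*` setT `|` setT `*` (~` cball0 dX x0 r).
  apply/seteqP; split => -[x y]; rewrite /prod_cball0 /cball0 /= ge_max.
    by move=> /negP; rewrite negb_and => /orP[] /negP; [left | right].
  by case=> -[] ? ? /andP[].
by apply: measurableU; apply: measurableX => //; exact: measurable_cball0C.
Qed.

End balls.

Section marginal.
Local Open Scope ereal_scope.
Context (R : realType) d1 d2 (T1 : measurableType d1) (T2 : measurableType d2).
Context (mu : {sigma_finite_measure set T1 -> \bar R})
  (nu : {sigma_finite_measure set T2 -> \bar R}).
Implicit Type f : T1 * T2 -> R.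

Lemma measurable_marginal f : measurable_fun setT f ->
  measurable_fun setT (fun x => Rintegral nu setT (fun y => f (x, y))).
Proof.
move=> mf; have mEf : measurable_fun setT (EFin \o f) by exact/measurable_EFinP.
have -> : (fun x => Rintegral nu setT (fun y => f (x, y))) = fine \o
    (fubini_F nu (EFin \o f)^\+ \- fubini_F nu (EFin \o f)^\-).
  apply/funext => x; rewrite /Rintegral integralE /= /fubini_F.
  by congr (fine (_ - _)); apply: eq_integral => y _; rewrite ?(funeposE, funenegE).
apply: measurableT_comp (fine_measurable _) _ => //.
by apply: emeasurable_funB; apply: measurable_fun_fubini_tonelli_F;
  [exact: measurable_funepos | exact: funepos_ge0 |
   exact: measurable_funeneg | exact: funeneg_ge0].
Qed.

Lemma marginalE f : (mu \x nu).-integrable setT (EFin \o f) ->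
  {ae mu, forall x, (Rintegral nu setT (fun y => f (x, y)))%:E =
                    \int[nu]_y (f (x, y))%:E}.
Proof.
move=> intf; apply: filterS (ae_integrable1 intf) => x intfx.
exact/fineK/(integrable_fin_num measurableT intfx).
Qed.

Lemma integral_marginal f (D : set T1) :
  (mu \x nu).-integrable setT (EFin \o f) -> measurable D ->
  \int[mu]_(x in D) (Rintegral nu setT (fun y => f (x, y)))%:E =
  \int[mu \x nu]_(p in D `*` setT) (f p)%:E.
Proof.
move=> intf mD; rewrite (ae_eq_integral (fubini_F nu (EFin \o f))) //; first last.
- by apply: filterS (marginalE intf) => x -> _.
- by apply: measurable_funTS; exact: measurable_fubini_F intf.
- apply: measurable_funTS; apply/measurable_EFinP/measurable_marginal.
  by case/integrableP: intf => /measurable_EFinP.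
rewrite integral_mkcond [RHS]integral_mkcond -integral12_prod_meas1; last first.
  apply/(integrable_mkcond _ (measurableX mD measurableT)).
  exact: integrableS measurableT (measurableX mD measurableT) (@subsetT _ _) intf.
apply: eq_integral => x _; rewrite /fubini_F patchE; case: ifPn => xD.
  by apply: eq_integral => y _; rewrite patchE mem_set //; split => //; exact/set_mem.
rewrite integral0_eq // => y _; rewrite patchE memNset //.
by case=> /mem_set; rewrite (negbTE xD).
Qed.

Lemma marginal_ae_ge0 f : measurable_fun setT f ->
  {ae mu \x nu, forall p, (0 <= f p)%R} ->
  {ae mu, forall x, (0 <= Rintegral nu setT (fun y => f (x, y)))%R}.
Proof.
move=> mf /ae_prod_xsection; apply: filterS => x fx0.
by apply: fine_ge0; apply: ae_ge0_integral_ge0 => //; exact: measurable_fun_pair2.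
Qed.

Lemma L2_marginal f : nu setT = 1 -> L2 (mu \x nu) f ->
  L2 mu (fun x => Rintegral nu setT (fun y => f (x, y))).
Proof.
move=> nu1 [mf if2]; have m2f : measurable_fun setT (fun p => (`|f p| ^+ 2)%:E).
  by apply/measurable_EFinP/measurable_funX; exact: measurableT_comp.
have mF := measurable_marginal mf; split => //.
apply: le_lt_trans if2; rewrite (fubini_tonelli1 _ m2f) //.
apply: ge0_le_integral => //.
- by apply/measurable_EFinP/measurable_funX; exact: measurableT_comp.
- exact: measurable_fun_fubini_tonelli_F.
- move=> x _; rewrite /fubini_F /=.
  have [fin|] := boolP (\int[nu]_y (`|f (x, y)| ^+ 2)%:E \is a fin_num).
    rewrite real_normK ?num_real //; apply: sqr_Rintegral_le nu1 _; split.
      exact: measurable_fun_pair2 mf.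
    by rewrite -ge0_fin_numE // integral_ge0.
  by rewrite ge0_fin_numE ?integral_ge0 // -leNgt leye_eq => /eqP ->; exact: leey.
Qed.

Lemma L2_fst (g : T1 -> R) : nu setT = 1 -> L2 mu g -> L2 (mu \x nu) (fun p => g p.1).
Proof.
move=> nu1 [mg ig]; split; first exact: measurableT_comp mg measurable_fst.
rewrite fubini_tonelli1 //; last first.
  apply/measurable_EFinP/measurable_funX; apply: measurableT_comp => //.
  exact: measurableT_comp mg measurable_fst.
rewrite (eq_integral (fun x => (`|g x| ^+ 2)%:E)) // => x _.
rewrite /fubini_F /= (integral_cst nu measurableT ((`|g x| ^+ 2)%:E)) -[RHS]mule1.
by congr (_ * _); exact: nu1.
Qed.

Lemma integral_prod_mul_fst f (g : T1 -> R) : measurable_fun setT g ->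
  (mu \x nu).-integrable setT (EFin \o f) ->
  (mu \x nu).-integrable setT (EFin \o (fun p => f p * g p.1)%R) ->
  \int[mu \x nu]_p (f p * g p.1)%:E =
  \int[mu]_x (Rintegral nu setT (fun y => f (x, y)) * g x)%:E.
Proof.
move=> mg intf intfg; rewrite -(integral12_prod_meas1 intfg).
apply: ae_eq_integral => //.
- exact: measurable_fubini_F intfg.
- apply/measurable_EFinP/measurable_funM => //; apply: measurable_marginal.
  by case/integrableP: intf => /measurable_EFinP.
- apply: filterS (ae_integrable1 intf) => x intfx _; rewrite /fubini_F /=.
  rewrite /Rintegral EFinM fineK ?(integrable_fin_num measurableT intfx) //.
  by rewrite muleC -integralZl //; apply: eq_integral => y _; rewrite -EFinM mulrC.
Qed.

End marginal.

Section marginal_cones.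
Local Open Scope ereal_scope.
Context (R : realType) d (X : measurableType d) (dX : X -> X -> R) (x0 : X).
Context (mu nu : probability X R) (m : R) (a ta : R -> R).
Hypotheses (dX_polish : polish_metric dX) (m_gt0 : (0 < m)%R).
Hypothesis ta_tail : tail_function ta.

Let prod_fin : (mu \x nu) setT < +oo.
Proof.
suff -> : (mu \x nu) setT = 1 by exact: ltry.
rewrite -setXTT product_measure1E // -[RHS]mule1.
by congr (_ * _); exact: probability_setT.
Qed.

Lemma Fcone_marginal f : Fcone_prod dX x0 (mu \x nu) m a f ->
  Fcone dX x0 mu m a ta (fun x => Rintegral nu setT (fun y => f (x, y))).
Proof.
move=> [Lf f_ge0 f_tail]; have [mf _] := Lf.
have intf := L2_integrable prod_fin Lf.
have mF := measurable_marginal nu mf.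
have F_ge0 := marginal_ae_ge0 mf f_ge0.
have mcballC r := measurable_cball0C x0 dX_polish r.
have intF : \int[mu]_x (Rintegral nu setT (fun y => f (x, y)))%:E =
    \int[mu \x nu]_p (f p)%:E by rewrite integral_marginal // setXTT.
split.
- by apply: L2_marginal Lf; exact: probability_setT.
- by apply: filterS F_ge0 => x + _.
- move=> r mr; rewrite -ae_ge0_integral_funrpos // integral_marginal // intF.
  apply: le_trans (f_tail r mr); apply: ae_ge0_subset_integral => //.
  + exact: measurableX.
  + exact: measurable_prod_cball0C.
  + move=> [x y] [xr _]; apply: contra_not xr.
    by rewrite /prod_cball0 /cball0 /= ge_max => /andP[].
- move=> r mr; rewrite ae_ge0_integral_funrneg //.
  apply: mule_ge0; last exact: ae_ge0_integral_ge0.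
  by case: ta_tail => _ ta_ge0 _; rewrite lee_fin ta_ge0 // (lt_le_trans m_gt0).
Qed.

Lemma Gcone_marginal g : Gcone mu (Fcone dX x0 mu m a ta) g ->
  Gcone (mu \x nu) (Fcone_prod dX x0 (mu \x nu) m a) (fun p => g p.1).
Proof.
move=> [Lg g_dual]; have [mg _] := Lg.
have Lg1 := L2_fst (probability_setT nu) Lg.
split => // f Ff; have [Lf _ _] := Ff.
rewrite integral_prod_mul_fst //; first exact: g_dual (Fcone_marginal Ff).
- exact: L2_integrable Lf.
- exact: L2_mul_integrable Lf Lg1.
Qed.

End marginal_cones.

Section swap_cones.
Local Open Scope ereal_scope.
Context (R : realType) d (X : measurableType d) (dX : X -> X -> R) (x0 : X).
Context (mu nu : {sigma_finite_measure set X -> \bar R}) (m : R) (a : R -> R).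
Hypothesis dX_polish : polish_metric dX.

Lemma Fcone_prod_swap f : Fcone_prod dX x0 (mu \x nu) m a f ->
  Fcone_prod dX x0 (nu \x mu) m a (fun q => f (swap q)).
Proof.
move=> [Lf f_ge0 f_tail]; have [mf _] := Lf.
have mEf : measurable_fun setT (EFin \o f) by exact/measurable_EFinP.
split; [exact: L2_prod_swap Lf | exact: ae_prod_swap f_ge0 |].
move=> r mr; have := f_tail r mr.
rewrite (integral_prod_swap mu nu) //.
rewrite (integral_prod_swap_in mu nu) //; last first.
  exact: measurable_prod_cball0C x0 dX_polish r.
by rewrite -(preimage_setC swap (prod_cball0 dX x0 r)) prod_cball0_swap.
Qed.

Lemma Gcone_prod_swap h : Gcone (nu \x mu) (Fcone_prod dX x0 (nu \x mu) m a) h ->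
  Gcone (mu \x nu) (Fcone_prod dX x0 (mu \x nu) m a) (fun p => h (swap p)).
Proof.
move=> [Lh h_dual]; split; first exact: L2_prod_swap.
move=> f Ff; have [[mf _] _ _] := Ff; have [mh _] := Lh.
rewrite integral_prod_swap; last first.
  apply/measurable_EFinP/measurable_funM => //.
  exact: measurableT_comp mh (@measurable_swap _ _ X X).
rewrite (eq_integral (fun q => (f (swap q) * h q)%:E)); last by move=> [].
exact: h_dual (Fcone_prod_swap Ff).
Qed.

End swap_cones.

Lemma hilbert_metric_comp_le (R : realType) d1 d2 (T1 : measurableType d1)
    (T2 : measurableType d2) (rho1 : {measure set T1 -> \bar R})
    (rho2 : {measure set T2 -> \bar R}) (C1 : set (T1 -> R)) (C2 : set (T2 -> R))
    (pi : T2 -> T1) (g g' : T1 -> R) :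
  (forall h, C1 h -> C2 (fun p => h (pi p))) ->
  ({ae rho2, forall p, g' (pi p) = 0} -> {ae rho1, forall x, g' x = 0}) ->
  (hilbert_metric rho2 C2 (fun p => g (pi p)) (fun p => g' (pi p)) <=
   hilbert_metric rho1 C1 g g')%E.
Proof.
move=> C12 g'_null; rewrite /hilbert_metric.
have [[[b [b' [b0 b'0 gb g'b]]] g'_nz]|_] := asboolP (cone_sim C1 g g' /\
    ~ {ae rho1, forall x, g' x = 0}); last exact: leey.
rewrite asboolT; last first.
  split; last by move/g'_null.
  by exists b, b'; split => //; [exact: C12 gb | exact: C12 g'b].
apply: leeD.
  apply/lne_nondecreasing/le_ereal_inf => _ [c [c0 gc] <-].
  by exists c => //; split => //; exact: C12 gc.
rewrite leeN2; apply/lne_nondecreasing/le_ereal_sup => _ [c [c0 gc] <-].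
by exists c => //; split => //; exact: C12 gc.
Qed.

Theorem lemma5p6 (R : realType) (d : measure_display) (X : measurableType d)
  (dX : X -> X -> R) (x0 : X) (mu nu : probability X R) (m : R)
  (a ta : R -> R) :
  polish_metric dX ->
  0 < m ->
  (0 < mu (cball0 dX x0 m))%E -> (0 < nu (cball0 dX x0 m))%E ->
  tail_function a -> (forall r, 0 < r -> 0 < a r) ->
  tail_function ta ->
  let P := (mu \x nu)%E in
  (forall f, Fcone_prod dX x0 P m a f ->
     Fcone dX x0 mu m a ta (fun x => Rintegral nu setT (fun y => f (x, y))) /\
     Fcone dX x0 nu m a ta (fun y => Rintegral mu setT (fun x => f (x, y)))) /\
  (forall g, Gcone mu (Fcone dX x0 mu m a ta) g ->
     Gcone P (Fcone_prod dX x0 P m a) (fun p => g p.1)) /\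
  (forall g g', Gcone mu (Fcone dX x0 mu m a ta) g ->
     Gcone mu (Fcone dX x0 mu m a ta) g' ->
     (hilbert_metric P (Gcone P (Fcone_prod dX x0 P m a))
        (fun p => g p.1) (fun p => g' p.1)
      <= hilbert_metric mu (Gcone mu (Fcone dX x0 mu m a ta)) g g')%E) /\
  (forall g, Gcone nu (Fcone dX x0 nu m a ta) g ->
     Gcone P (Fcone_prod dX x0 P m a) (fun p => g p.2)) /\
  (forall g g', Gcone nu (Fcone dX x0 nu m a ta) g ->
     Gcone nu (Fcone dX x0 nu m a ta) g' ->
     (hilbert_metric P (Gcone P (Fcone_prod dX x0 P m a))
        (fun p => g p.2) (fun p => g' p.2)
      <= hilbert_metric nu (Gcone nu (Fcone dX x0 nu m a ta)) g g')%E).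
Proof.
move=> dX_polish m_gt0 _ _ _ _ ta_tail P.
have G_fst g : Gcone mu (Fcone dX x0 mu m a ta) g ->
    Gcone P (Fcone_prod dX x0 P m a) (fun p => g p.1).
  exact: Gcone_marginal.
have G_snd g : Gcone nu (Fcone dX x0 nu m a ta) g ->
    Gcone P (Fcone_prod dX x0 P m a) (fun p => g p.2).
  move=> /(Gcone_marginal mu dX_polish m_gt0 ta_tail) Gg.
  exact (Gcone_prod_swap dX_polish Gg).
have setT_neq0 (rho : probability X R) : rho setT != 0%E.
  by rewrite probability_setT oner_neq0.
split.
  move=> f Ff; split; first exact: Fcone_marginal.
  exact: Fcone_marginal (Fcone_prod_swap dX_polish Ff).
split; first exact: G_fst.
split.
  move=> g g' _ _; apply: hilbert_metric_comp_le G_fst _.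
  exact: ae_fst (setT_neq0 nu).
split; first exact: G_snd.
move=> g g' _ _; apply: hilbert_metric_comp_le G_snd _.
by move=> /ae_prod_swap; exact: ae_fst (setT_neq0 mu).
Qed.
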